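(* Let $(l,k,b)$ be a suspension triplet for $(X_A,\sigma_A)$. Then the one-sided suspension space $S^{l,k}_{A,b}$ is a compact Hausdorff space.
   Context: Let $N>1$ and $A$ an irreducible $N\times N$ $\{0,1\}$-matrix which is not a permutation matrix. $X_A$ is the compact space of sequences $(x_n)_{n\in\mathbb N}$, $x_n\in\{1,\dots,N\}$, $A(x_n,x_{n+1})=1$ (product topology), with $\sigma_A((x_n)_n)=(x_{n+1})_n$. $\mathbb Z_+$, $\mathbb R_+$ are nonnegative integers/reals. $H^A$ is the quotient of $C(X_A,\mathbb Z)$ by $\{u-u\circ\sigma_A\}$, $H^A_+$ the classes of $\mathbb Z_+$-valued continuous functions; $[f]\in H^A_+$ is an order unit if for every $[u]\in H^A$ some $n\in\mathbb N$ has $n[f]-[u]\in H^A_+$. A suspension triplet is $(l,k,b)$ with $l,k\in C(X_A,\mathbb R_+)$, $b\in C(X_A,\mathbb R)$ such that $c=l-k$ is integer-valued with $[c]$ an order unit, and $l-b$, $k-b\circ\sigma_A$ take values in $\mathbb Z_+$. $X^{\mathbb R}_{A,b}=\{(x,r)\in X_A\times\mathbb R: r\ge b(x)\}$ (subspace topology of $X_A\times\mathbb R$), $\sim_{l,k}$ is the equivalence relation generated by $(x,r)\sim_{l,k}(\sigma_A(x),r-c(x))$ whenever $r\ge l(x)$, and $S^{l,k}_{A,b}=X^{\mathbb R}_{A,b}/\!\sim_{l,k}$ with the quotient topology. *)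

From HB Require Import structures.
From Stdlib Require Import Relations.
From mathcomp Require Import all_boot all_order all_algebra perm generic_quotient.
From mathcomp Require Import all_classical all_reals all_analysis.
Import Order.TTheory GRing.Theory Num.Theory.
Import numFieldTopology.Exports numFieldNormedType.Exports.

Set Implicit Arguments.
Unset Strict Implicit.
Unset Printing Implicit Defensive.

Local Open Scope classical_set_scope.
Local Open Scope ring_scope.
Local Open Scope quotient_scope.

Definition zero_one_mx (N : nat) (A : 'M[nat]_N) : Prop :=
  forall i j, A i j = 0%N \/ A i j = 1%N.

Definition irreducible_mx (N : nat) (A : 'M[nat]_N) : Prop :=
  forall i j, exists n : nat, (0 < (A ^+ n) i j)%N.

Definition is_permutation_mx (N : nat) (A : 'M[nat]_N) : Prop :=
  exists s : {perm 'I_N}, A = perm_mx s.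

(** Alphabet {1,..,N} (here 'I_N) with the discrete topology, and the
    space of all one-sided sequences with the product topology. *)
Notation alphabet N := (discrete_topology 'I_N).
Notation seq_space N := {ptws nat -> alphabet N}.

Definition XA_set (N : nat) (A : 'M[nat]_N) : set (seq_space N) :=
  [set x | forall n : nat, A (x n) (x n.+1) = 1%N].

Notation XA A := (set_type (XA_set A)).

Lemma shift_in_XA (N : nat) (A : 'M[nat]_N) (x : XA A) :
  XA_set A (fun n => (\val x : seq_space N) n.+1).
Proof.
case: x => x /= /set_mem Hx n; exact: Hx.
Qed.

Definition sigmaA (N : nat) (A : 'M[nat]_N) (x : XA A) : XA A :=
  SigSub (mem_set (shift_in_XA x)).

Definition contZ (N : nat) (A : 'M[nat]_N) (f : XA A -> int) : Prop :=
  continuous (f : XA A -> discrete_topology int).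

(** [f] = [g] in H^A = C(X_A,Z) / {u - u o sigma_A | u in C(X_A,Z)}. *)
Definition cohomologous (N : nat) (A : 'M[nat]_N) (f g : XA A -> int) : Prop :=
  exists u : XA A -> int, contZ u /\ forall x, f x - g x = u x - u (sigmaA x).

(** [f] belongs to H^A_+ : it is the class of a Z_+-valued continuous function. *)
Definition in_HA_pos (N : nat) (A : 'M[nat]_N) (f : XA A -> int) : Prop :=
  exists g : XA A -> int, contZ g /\ (forall x, 0 <= g x) /\ cohomologous f g.

Definition order_unit (N : nat) (A : 'M[nat]_N) (f : XA A -> int) : Prop :=
  contZ f /\ in_HA_pos f /\
  forall u : XA A -> int, contZ u ->
    exists n : nat, in_HA_pos (fun x => (f x *+ n) - u x).

Section Suspension.
Variable R : realType.

Definition suspension_triplet (N : nat) (A : 'M[nat]_N)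
    (l k b : XA A -> R) : Prop :=
  [/\ continuous l /\ continuous k /\ continuous b,
      (forall x, 0 <= l x) /\ (forall x, 0 <= k x),
      (forall x, l x - k x \is a Num.int)
        /\ order_unit (fun x => Num.floor (l x - k x)),
      (forall x, l x - b x \is a Num.nat)
    & (forall x, k x - b (sigmaA x) \is a Num.nat)].

Definition XR_set (N : nat) (A : 'M[nat]_N) (b : XA A -> R) : set (XA A * R) :=
  [set p | b p.1 <= p.2].

Notation XR b := (set_type (XR_set b)).

Definition susp_step (N : nat) (A : 'M[nat]_N) (l k b : XA A -> R)
    (p q : XR b) : Prop :=
  let: (x, r) := (\val p : XA A * R) in
  l x <= r /\ (\val q : XA A * R) = (sigmaA x, r - (l x - k x)).

End Suspension.

Section EquivClosure.
Variables (T : choiceType) (rel0 : T -> T -> Prop).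

Definition gen_equiv : rel T := fun x y => `[< clos_refl_sym_trans T rel0 x y >].

Lemma gen_equiv_refl : reflexive gen_equiv.
Proof. by move=> x; apply/asboolP; apply: rst_refl. Qed.

Lemma gen_equiv_sym : symmetric gen_equiv.
Proof.
move=> x y; apply/asboolP/asboolP => H; exact: rst_sym.
Qed.

Lemma gen_equiv_trans : transitive gen_equiv.
Proof.
move=> y x z /asboolP Hxy /asboolP Hyz; apply/asboolP; exact: rst_trans Hyz.
Qed.

Definition gen_equiv_rel : equiv_rel T :=
  EquivRel gen_equiv gen_equiv_refl gen_equiv_sym gen_equiv_trans.
End EquivClosure.

Definition suspension_space (R : realType) (N : nat) (A : 'M[nat]_N)
    (l k b : XA A -> R) : Type :=
  quotient_topology {eq_quot gen_equiv_rel (@susp_step R N A l k b)}.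

(* Since [l - k] is an order unit, n (l - k) >= 1 + v - v o sigma_A for some n
   and some bounded v, so the Birkhoff sums of c = l - k grow linearly.  Hence
   every point of X^R_{A,b} is equivalent to one with b x <= r < l x, and S is
   the continuous image of the compact X_A x [0, 1].  To separate points, let
   w be a cutoff equal to 1 on {r >= l x} and to 0 on {r <= l x - d}, psi_j the
   j-th formal step (x, r) |-> (sigma_A^j x, r - c_j x), and
   g (x, r) = phi x (l x - r) (1 - w (x, r)).  The sum over j of
   (prod_(i < j) w (psi_i p)) g (psi_j p) is locally finite and invariant under
   the identification, so it descends to a continuous function on S; it equals
   g at the points with r <= l x - d, and suitable d and phi separate points. *)

From HB Require Import structures.
From Stdlib Require Import Relations.
From mathcomp Require Import all_boot all_order all_algebra generic_quotient.
From mathcomp Require Import all_classical all_reals all_analysis.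
From mathcomp Require Import lra.
Import Order.TTheory GRing.Theory Num.Theory.
Import numFieldTopology.Exports numFieldNormedType.Exports.

Set Implicit Arguments.
Unset Strict Implicit.
Unset Printing Implicit Defensive.

Local Open Scope classical_set_scope.
Local Open Scope ring_scope.
Local Open Scope quotient_scope.

Lemma pair_continuous {T X Y : topologicalType} (f : T -> X) (g : T -> Y) :
  continuous f -> continuous g -> continuous (fun t => (f t, g t)).
Proof. by move=> cf cg t; apply: cvg_pair; [exact: cf | exact: cg]. Qed.

Lemma fst_continuous {X Y : topologicalType} : continuous (@fst X Y).
Proof. by case=> x y; exact: cvg_fst. Qed.

Lemma snd_continuous {X Y : topologicalType} : continuous (@snd X Y).
Proof. by case=> x y; exact: cvg_snd. Qed.

Lemma prod_topology_continuous {I : choiceType} {X : topologicalType}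
    {K : I -> topologicalType} (f : X -> prod_topology K) :
  (forall i, continuous (fun x => f x i)) -> continuous f.
Proof.
move=> cf x; apply/cvg_sup => i; move: x.
apply/(@continuousP _ (initial_topology (@^~ i))) => U [V oV <-].
exact: open_comp (fun y _ => cf i y) oV.
Qed.

Lemma discrete_continuous (T : choiceType) (Y : topologicalType)
    (f : discrete_topology T -> Y) :
  continuous f.
Proof.
move=> x U /nbhs_singleton Ux; apply: open_nbhs_nbhs; split => //.
exact: discrete_open.
Qed.

Lemma compact_set_type {X : topologicalType} (E : set X) :
  compact E -> compact [set: set_type E].
Proof.
move=> cE.
have [[e0 _]|empty] := pselect (exists e : set_type E, True); last first.
  suff -> : [set: set_type E] = set0 by exact: compact0.
  by rewrite eqEsubset; split => // e _; apply: empty; exists e.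
pose h z : set_type E :=
  if pselect (E z) is left Ez then exist _ z (mem_set Ez) else e0.
have hK (e : set_type E) : h (val e) = e.
  rewrite /h; case: pselect => [Ez|]; first exact: val_inj.
  by have := set_mem (valP e).
suff -> : [set: set_type E] = h @` E.
  apply: continuous_compact => //; apply/subspace_sigL_continuousP.
  have -> : sigL E h = id by apply/funext => e /=; exact: hK.
  by move=> x; exact: cvg_id.
rewrite eqEsubset; split => // e _; exists (val e) => //.
exact: (set_mem (valP e)).
Qed.

Lemma hausdorff_separating_functions {R : realType} {T : topologicalType} :
  (forall x y : T, x != y -> exists2 f : T -> R, continuous f & f x != f y) ->
  hausdorff_space T.
Proof.
move=> sep; rewrite open_hausdorff => x y /sep [f cf fxy].
have := @Rhausdorff R; rewrite open_hausdorff => /(_ _ _ fxy).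
move=> [[U V] [/= Ux Vy] [/= oU oV /eqP UV0]].
exists (f @^-1` U, f @^-1` V); first by move: Ux Vy; rewrite !in_setE.
split; [exact: open_comp (fun z _ => cf z) oU|exact: open_comp (fun z _ => cf z) oV|].
by apply/eqP; rewrite /= -preimage_setI UV0 preimage_set0.
Qed.

Lemma continuous_iter {T : topologicalType} (s : T -> T) j :
  continuous s -> continuous (iter j s).
Proof.
move=> cs; elim: j => [|j IH] x /=; first exact: cvg_id.
by apply: (@continuous_comp _ _ _ (iter j s) s); [exact: IH|exact: cs].
Qed.

Section ShiftSpace.
Variables (N : nat) (A : 'M[nat]_N).

Lemma seq_space_compact : compact [set: seq_space N].
Proof.
have := @tychonoff nat (fun _ => alphabet N) (fun _ => setT)
  (fun _ => @finite_compact (alphabet N) setT (@finite_finset ('I_N : finType) setT)).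
by congr compact; apply/funext => x; apply/propext.
Qed.

Lemma XA_closed : closed (XA_set A).
Proof.
move=> z zcl n.
have nbz : nbhs z [set y : seq_space N | y n = z n /\ y n.+1 = z n.+1].
  apply: filterI.
  - exact: (@proj_continuous nat (fun _ => alphabet N) n z _ (discrete_set1 _)).
  - exact: (@proj_continuous nat (fun _ => alphabet N) n.+1 z _ (discrete_set1 _)).
have [y [XAy [<- <-]]] := zcl _ nbz.
exact: XAy.
Qed.

Lemma XA_compact : compact [set: XA A].
Proof.
apply: compact_set_type.
exact: subclosed_compact XA_closed seq_space_compact _.
Qed.

Lemma sigmaA_continuous : continuous (@sigmaA N A).
Proof.
pose shift (z : seq_space N) : seq_space N := fun n => z n.+1.
have shift_continuous : continuous shift.
  apply: prod_topology_continuous => i.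
  exact: (@proj_continuous nat (fun _ => alphabet N) i.+1).
apply: (@continuous_comp_initial _ _ _ (@set_val _ (XA_set A))).
have -> : set_val \o @sigmaA N A = shift \o set_val by [].
by move=> x; apply: continuous_comp; [exact: initial_continuous|exact: shift_continuous].
Qed.

Lemma XA_coordinate_separation (R : realType) (y1 y2 : XA A) : y1 <> y2 ->
  exists2 phi : XA A -> R, continuous phi & phi y1 = 1 /\ phi y2 = 0.
Proof.
move=> y12; have [m ym] : exists m, (val y2 : seq_space N) m != (val y1 : seq_space N) m.
  apply: contrapT => same; apply: y12; apply: val_inj; apply/funext => m.
  by apply/eqP; apply: contrapT => ne; apply: same; exists m; rewrite eq_sym; exact/negP.
pose ind (z : alphabet N) : R := if z == (val y1 : seq_space N) m then 1 else 0.
exists (fun x => ind ((val x : seq_space N) m)); last by rewrite /ind eqxx (negbTE ym).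
move=> x; apply: (@continuous_comp _ (alphabet N) _
  (fun x : XA A => (val x : seq_space N) m) ind).
  apply: (@continuous_comp (XA A) (seq_space N) _ set_val (proj m)).
    exact: initial_continuous.
  exact: (@proj_continuous nat (fun _ => alphabet N) m).
exact: discrete_continuous.
Qed.

End ShiftSpace.

Section BirkhoffSums.
Variables (R : realFieldType) (T : Type) (s : T -> T) (f : T -> R).

Definition birkhoff_sum j x := \sum_(i < j) f (iter i s x).

Lemma birkhoff_sum0 x : birkhoff_sum 0 x = 0.
Proof. by rewrite /birkhoff_sum big_ord0. Qed.

Lemma birkhoff_sumS j x : birkhoff_sum j.+1 x = birkhoff_sum j x + f (iter j s x).
Proof. by rewrite /birkhoff_sum big_ord_recr. Qed.

Lemma birkhoff_sumSr j x : birkhoff_sum j.+1 x = f x + birkhoff_sum j (s x).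
Proof.
rewrite /birkhoff_sum big_ord_recl /=; congr (_ + _); apply: eq_bigr => i _.
by rewrite add0n -iterS iterSr.
Qed.

Lemma birkhoff_sum_linear_growth (n : nat) (M : R) (v : T -> R) :
    (forall x, `|v x| <= M) -> (forall x, 1 + v x - v (s x) <= n%:R * f x) ->
  forall j x, j%:R - 2 * M <= n%:R * birkhoff_sum j x.
Proof.
move=> vM cob j x.
suff telescope : j%:R + v x - v (iter j s x) <= n%:R * birkhoff_sum j x.
  move: (vM x) (vM (iter j s x)); rewrite !ler_norml => /andP[? ?] /andP[? ?].
  lra.
elim: j => [|j IH]; first by rewrite birkhoff_sum0 mulr0; lra.
rewrite birkhoff_sumS mulrDr iterS -addn1 natrD.
have := cob (iter j s x); lra.
Qed.

End BirkhoffSums.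

Lemma birkhoff_sum_continuous (R : realFieldType) (T : topologicalType)
    (s : T -> T) (f : T -> R) j :
  continuous s -> continuous f -> continuous (birkhoff_sum s f j).
Proof.
move=> cs cf; elim: j => [|j IH].
  have -> : birkhoff_sum s f 0 = fun=> 0 by apply/funext => x; rewrite birkhoff_sum0.
  exact: cst_continuous.
have -> : birkhoff_sum s f j.+1 = birkhoff_sum s f j \+ (f \o iter j s).
  by apply/funext => x; rewrite birkhoff_sumS.
move=> x; apply: continuousD; first exact: IH.
by apply: continuous_comp; [exact: continuous_iter|exact: cf].
Qed.

Lemma birkhoff_sum_exceeds (R : realType) (T : Type) (s : T -> T) (f : T -> R)
    (n : nat) (B : R) :
    (forall j x, j%:R - B <= n%:R * birkhoff_sum s f j x) ->
  forall x r, r < birkhoff_sum s f (Num.truncn (n%:R * r + B)).+1 x.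
Proof.
move=> growth x r; set j := (Num.truncn _).+1.
have := truncnS_gt (n%:R * r + B); rewrite -/j => jgt.
have := growth j x; rewrite ltNge; apply: contraTN => Sler.
have : n%:R * birkhoff_sum s f j x <= n%:R * r by rewrite ler_wpM2l.
lra.
Qed.

Lemma compact_int_bounded (R : realType) (T : topologicalType) (v : T -> int) :
    compact [set: T] -> continuous (v : T -> discrete_topology int) ->
  exists M : R, forall x, `|(v x)%:~R| <= M.
Proof.
move=> cT cv.
have cvR : continuous (fun x => (v x)%:~R : R).
  move=> x; apply: (@continuous_comp _ (discrete_topology int) _ v
    (fun z : discrete_topology int => (z%:~R : R))).
    exact: cv.
  exact: discrete_continuous.
have [M [_ HM]] := compact_bounded (continuous_compact (continuous_subspaceT cvR) cT).
by exists (M + 1) => x; apply: HM; [lra|exists x].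
Qed.

Lemma order_unit_coboundary (N : nat) (A : 'M[nat]_N) (c : XA A -> int) :
  order_unit c -> exists n (v : XA A -> int),
    contZ v /\ forall x, 1 + v x - v (sigmaA x) <= c x *+ n.
Proof.
case=> _ [_ ou]; have [|n [g [_ [g0 [v [cv hv]]]]]] := ou (fun=> 1).
  exact: cst_continuous.
exists n, v; split => // x; have := g0 x; have := hv x; lra.
Qed.

Section Suspension.
Variables (R : realType) (N : nat) (A : 'M[nat]_N) (l k b : XA A -> R).
Hypothesis triplet : suspension_triplet l k b.

Local Notation sigma := (@sigmaA N A).

Definition lk_diff x := l x - k x.

Local Notation S_c := (birkhoff_sum sigma lk_diff).

Lemma l_continuous : continuous l. Proof. by case: triplet => -[]. Qed.
Lemma k_continuous : continuous k. Proof. by case: triplet => -[? []]. Qed.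
Lemma b_continuous : continuous b. Proof. by case: triplet => -[? []]. Qed.
Lemma l_ge0 x : 0 <= l x. Proof. by case: triplet => _ []. Qed.

Lemma b_le_l x : b x <= l x.
Proof. by case: triplet => _ _ _ /(_ x) /natr_ge0; rewrite subr_ge0. Qed.

Lemma b_sigma_le_k x : b (sigma x) <= k x.
Proof. by case: triplet => _ _ _ _ /(_ x) /natr_ge0; rewrite subr_ge0. Qed.

Lemma lk_diff_continuous : continuous lk_diff.
Proof. by move=> x; apply: continuousB; [exact: l_continuous|exact: k_continuous]. Qed.

Lemma lk_diff_linear_growth :
  exists n (B : R), forall j x, j%:R - B <= n%:R * S_c j x.
Proof.
case: triplet => _ _ [lk_int lk_unit] _ _.
have [n [v [cv cob]]] := order_unit_coboundary lk_unit.
have [M vM] := @compact_int_bounded R _ v (XA_compact (A:=A)) cv.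
exists n, (2 * M); apply: birkhoff_sum_linear_growth vM _ => x.
rewrite /lk_diff -(floorK (lk_int x)) mulr_natl.
by have := cob x; rewrite -(ler_int R) rmorphMn !rmorphB rmorphD rmorph1.
Qed.

Local Notation XR := (set_type (XR_set b)).
Local Notation step := (@susp_step R N A l k b).
Local Notation equiv := (clos_refl_sym_trans XR step).

Definition orbit_point j (p : XA A * R) : XA A * R :=
  (iter j sigma p.1, p.2 - S_c j p.1).

Lemma orbit_point0 p : orbit_point 0 p = p.
Proof. by rewrite /orbit_point birkhoff_sum0 subr0; case: p. Qed.

Lemma orbit_pointS j x r :
  orbit_point j.+1 (x, r) = orbit_point j (sigma x, r - lk_diff x).
Proof. by rewrite /orbit_point /= -iterS iterSr birkhoff_sumSr opprD addrA. Qed.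

Lemma orbit_point_succ j p :
  orbit_point j.+1 p = (sigma (orbit_point j p).1,
                        (orbit_point j p).2 - lk_diff (orbit_point j p).1).
Proof. by rewrite /orbit_point /= birkhoff_sumS opprD addrA. Qed.

Lemma equiv_orbit_point (p : XR) j :
    (forall i, (i < j)%N -> l (orbit_point i (val p)).1 <= (orbit_point i (val p)).2) ->
  exists2 q : XR, val q = orbit_point j (val p) & equiv p q.
Proof.
elim: j => [|j IH] steps; first by exists p; [rewrite orbit_point0|exact: rst_refl].
have [[[x r] qb] qE pq] := IH (fun i ij => steps i (ltnW ij)).
have {}qE : (x, r) = orbit_point j (val p) := qE.
have := steps j (ltnSn j); rewrite -qE /= => lr.
have bq : XR_set b (orbit_point j.+1 (val p)).
  rewrite /XR_set orbit_point_succ -qE /=.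
  by have := b_sigma_le_k x; rewrite /lk_diff; lra.
exists (SigSub (mem_set bq)) => //.
apply: rst_trans pq _; apply: rst_step; rewrite /susp_step /=.
by rewrite orbit_point_succ -qE.
Qed.

Lemma equiv_normal_form (p : XR) :
  exists2 q : XR, equiv p q & (val q).2 < l (val q).1.
Proof.
have [n [B growth]] := lk_diff_linear_growth.
pose below j := (orbit_point j (val p)).2 < l (orbit_point j (val p)).1.
have exists_below : exists j, below j.
  exists (Num.truncn (n%:R * (val p).2 + B)).+1; rewrite /below /orbit_point /=.
  have := birkhoff_sum_exceeds growth (val p).1 (val p).2.
  have := l_ge0 (iter (Num.truncn (n%:R * (val p).2 + B)).+1 sigma (val p).1).
  lra.
have [j0 below_j0 min_j0] := ex_minnP exists_below.
have [|q qE pq] := @equiv_orbit_point p j0; last by exists q; rewrite // qE.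
move=> i ij0; rewrite leNgt; apply/negP => below_i.
by have := min_j0 i below_i; rewrite leqNgt ij0.
Qed.

Lemma orbit_point_continuous j : continuous (orbit_point j).
Proof.
apply: pair_continuous.
  move=> p; apply: continuous_comp; first exact: fst_continuous.
  exact/continuous_iter/sigmaA_continuous.
move=> p; apply: continuousB; first exact: snd_continuous.
apply: continuous_comp; first exact: fst_continuous.
exact/birkhoff_sum_continuous/lk_diff_continuous/sigmaA_continuous.
Qed.

Section Separator.
Variables (n : nat) (B d : R) (phi : XA A -> R).
Hypothesis growth : forall j x, j%:R - B <= n%:R * S_c j x.
Hypothesis d_gt0 : 0 < d.
Hypothesis phi_continuous : continuous phi.

Definition cutoff (p : XA A * R) : R :=
  Num.min 1 (Num.max 0 ((p.2 - l p.1) / d + 1)).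

Definition sep_base (p : XA A * R) : R := phi p.1 * (l p.1 - p.2) * (1 - cutoff p).

Definition sep_weight j p := \prod_(i < j) cutoff (orbit_point i p).

Definition sep_partial M p := \sum_(j < M) sep_weight j p * sep_base (orbit_point j p).

(* At index truncn (n (r + d) + B) + 1 the Birkhoff sum exceeds r + d, so the
   cutoff vanishes there and kills all later terms. *)
Definition sep_nterms (r : R) : nat := (Num.truncn (n%:R * (r + d) + B)).+2.

Definition sep_fun p := sep_partial (sep_nterms p.2) p.

Lemma cutoff_eq1 p : l p.1 <= p.2 -> cutoff p = 1.
Proof.
move=> lr; have ge1 : 1 <= (p.2 - l p.1) / d + 1.
  by rewrite lerDr divr_ge0 // ?subr_ge0 // ltW.
by rewrite /cutoff (@max_r _ _ 0) ?(le_trans _ ge1) // min_l.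
Qed.

Lemma cutoff_eq0 p : p.2 <= l p.1 - d -> cutoff p = 0.
Proof.
move=> rl; have le0 : (p.2 - l p.1) / d + 1 <= 0.
  rewrite -(lerD2r (-1)) addrK add0r ler_pdivrMr // mulN1r; lra.
by rewrite /cutoff max_l // min_r.
Qed.

Lemma sep_base_eq0 p : l p.1 <= p.2 -> sep_base p = 0.
Proof. by move=> lr; rewrite /sep_base cutoff_eq1 // subrr mulr0. Qed.

Lemma sep_weight_eq0 j x r : (sep_nterms r <= j)%N -> sep_weight j (x, r) = 0.
Proof.
move=> jn; apply/eqP/prodf_eq0.
exists (Ordinal (jn : ((Num.truncn (n%:R * (r + d) + B)).+1 < j)%N)) => //=.
apply/eqP/cutoff_eq0; rewrite /orbit_point /=.
have := birkhoff_sum_exceeds growth x (r + d).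
have := l_ge0 (iter (Num.truncn (n%:R * (r + d) + B)).+1 sigma x).
lra.
Qed.

Lemma sep_partial_stable M x r : (sep_nterms r <= M)%N ->
  sep_partial M (x, r) = sep_fun (x, r).
Proof.
rewrite /sep_fun /=; elim: M => [|M IH]; first by rewrite /sep_nterms.
rewrite leq_eqVlt => /orP[/eqP <- //|nM].
rewrite /sep_partial big_ord_recr /= -/(sep_partial M (x, r)).
by rewrite sep_weight_eq0 // mul0r addr0 IH.
Qed.

Lemma sep_fun_step x r : l x <= r -> sep_fun (x, r) = sep_fun (sigma x, r - lk_diff x).
Proof.
move=> lr; set M := maxn (sep_nterms r) (sep_nterms (r - lk_diff x)).
rewrite -(@sep_partial_stable M.+1 x r) ?leqW ?leq_maxl //.
rewrite -(@sep_partial_stable M (sigma x) (r - lk_diff x)) ?leq_maxr //.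
rewrite /sep_partial big_ord_recl orbit_point0 sep_base_eq0 // mulr0 add0r.
apply: eq_bigr => j _; rewrite /sep_weight big_ord_recl orbit_point0 cutoff_eq1 //.
rewrite mul1r orbit_pointS; congr (_ * _); apply: eq_bigr => i _.
by rewrite orbit_pointS.
Qed.

Lemma sep_fun_eq_base p : p.2 <= l p.1 - d -> sep_fun p = sep_base p.
Proof.
move=> rl; rewrite /sep_fun /sep_partial /sep_nterms big_ord_recl /sep_weight.
rewrite big_ord0 mul1r orbit_point0 big1 ?addr0 // => j _.
by rewrite big_ord_recl orbit_point0 cutoff_eq0 // !mul0r.
Qed.

Lemma cutoff_continuous : continuous cutoff.
Proof.
have -> : cutoff = (fun=> 1) \min ((fun=> 0) \max
                     (fun p : XA A * R => (p.2 - l p.1) / d + 1)) by [].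
apply: min_fun_continuous; first exact: cst_continuous.
apply: max_fun_continuous; first exact: cst_continuous.
move=> p; apply: (@continuousD _ _ _ (fun p : XA A * R => (p.2 - l p.1) / d) (fun=> 1));
  last exact: cst_continuous.
apply: (@continuousM _ _ (fun p : XA A * R => p.2 - l p.1) (fun=> d^-1));
  last exact: cst_continuous.
apply: (@continuousB _ _ _ snd (l \o fst)); first exact: snd_continuous.
by apply: continuous_comp; [exact: fst_continuous|exact: l_continuous].
Qed.

Lemma sep_base_continuous : continuous sep_base.
Proof.
move=> p; apply: (@continuousM _ _ (fun p : XA A * R => phi p.1 * (l p.1 - p.2))
                                   (fun p => 1 - cutoff p)); last first.
  apply: (@continuousB R R^o _ (fun=> 1) cutoff); first exact: cst_continuous.
  exact: cutoff_continuous.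
apply: (@continuousM _ _ (phi \o fst) (fun p : XA A * R => l p.1 - p.2)).
  by apply: continuous_comp; [exact: fst_continuous|exact: phi_continuous].
apply: (@continuousB _ _ _ (l \o fst) snd); last exact: snd_continuous.
by apply: continuous_comp; [exact: fst_continuous|exact: l_continuous].
Qed.

Lemma sep_weight_continuous j : continuous (sep_weight j).
Proof.
elim: j => [|j IH].
  have -> : sep_weight 0 = fun=> 1 by apply/funext => p; rewrite /sep_weight big_ord0.
  exact: cst_continuous.
have -> : sep_weight j.+1 = sep_weight j \* (cutoff \o orbit_point j).
  by apply/funext => p; rewrite /sep_weight big_ord_recr.
move=> p; apply: continuousM; first exact: IH.
apply: continuous_comp; [exact: orbit_point_continuous|exact: cutoff_continuous].
Qed.

Lemma sep_partial_continuous M : continuous (sep_partial M).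
Proof.
elim: M => [|M IH].
  have -> : sep_partial 0 = fun=> 0 by apply/funext => p; rewrite /sep_partial big_ord0.
  exact: cst_continuous.
have -> : sep_partial M.+1 =
    sep_partial M \+ (sep_weight M \* (sep_base \o orbit_point M)).
  by apply/funext => p; rewrite /sep_partial big_ord_recr.
move=> p; apply: continuousD; first exact: IH.
apply: continuousM; first exact: sep_weight_continuous.
apply: continuous_comp; [exact: orbit_point_continuous|exact: sep_base_continuous].
Qed.

(* Near (x0, r0) only the first sep_nterms (r0 + 1) terms can be nonzero. *)
Lemma sep_fun_continuous : continuous sep_fun.
Proof.
move=> [x0 r0]; set M := sep_nterms (r0 + 1).
have nterms_le r : r <= r0 + 1 -> (sep_nterms r <= M)%N.
  move=> rr0; rewrite /M /sep_nterms !ltnS; apply: le_truncn; rewrite lerD2r.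
  by apply: ler_wpM2l; rewrite ?ler0n ?lerD2r.
have near_partial : \forall p \near (x0, r0), sep_partial M p = sep_fun p.
  have : \forall p \near (x0, r0), p.2 < r0 + 1.
    have near_r0 : \forall r \near r0, r < r0 + 1 by apply: lt_nbhsl; lra.
    exact: (@snd_continuous (XA A) R (x0, r0) _ near_r0).
  apply: filterS => -[x r] /= rr0.
  by apply: sep_partial_stable; apply/nterms_le/ltW.
apply: cvg_trans (near_eq_cvg near_partial) _.
rewrite -(@sep_partial_stable M x0 r0); last by apply: nterms_le; lra.
exact: sep_partial_continuous.
Qed.

End Separator.

Local Notation S := (suspension_space l k b).

Lemma suspension_eqP (p q : XR) : \pi_S p = \pi_S q <-> equiv p q.
Proof.
split=> [/eqquotP|pq]; first by move/asboolP.
by apply/eqquotP; apply/asboolP.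
Qed.

Lemma suspension_normal_point (s : S) :
  exists2 q : XR, \pi_S q = s & (val q).2 < l (val q).1.
Proof.
have [q sq ql] := equiv_normal_form (repr s).
exists q => //; rewrite -[RHS]reprK; apply/suspension_eqP; exact: rst_sym.
Qed.

Lemma suspension_compact : compact [set: S].
Proof.
(* The absolute value keeps the point in X^R_{A,b} for every t, so g is total. *)
have bl (x : XA A) (t : R) : XR_set b (x, b x + `|t| * (l x - b x)).
  by rewrite /XR_set /= lerDl mulr_ge0 // subr_ge0 b_le_l.
pose g (p : XA A * R) : XR := SigSub (mem_set (bl p.1 p.2)).
have g_continuous : continuous g.
  apply: (@continuous_comp_initial _ _ _ (@set_val _ (XR_set b))).
  apply: pair_continuous; first exact: fst_continuous.
  move=> p; apply: (@continuousD _ _ _ (b \o fst)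
    (fun p : XA A * R => `|p.2| * (l p.1 - b p.1))).
    by apply: continuous_comp; [exact: fst_continuous|exact: b_continuous].
  apply: (@continuousM _ _ (fun p : XA A * R => `|p.2|) (fun p => l p.1 - b p.1)).
    by apply: continuous_comp; [exact: snd_continuous|exact: norm_continuous].
  apply: (@continuousB _ _ _ (l \o fst) (b \o fst)).
    by apply: continuous_comp; [exact: fst_continuous|exact: l_continuous].
  by apply: continuous_comp; [exact: fst_continuous|exact: b_continuous].
suff -> : [set: S] = (\pi_S \o g) @` ([set: XA A] `*` `[0, 1]).
  apply: continuous_compact.
    apply/continuous_subspaceT => p.
    by apply: continuous_comp; [exact: g_continuous|exact: pi_continuous].
  by apply: compact_setX; [exact: XA_compact|exact: segment_compact].
rewrite eqEsubset; split => // s _.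
have [[[y t] qb] <-] := suspension_normal_point s; rewrite /= => tl.
have bt : b y <= t := set_mem qb.
have lb : 0 < l y - b y by lra.
have t01 : 0 <= (t - b y) / (l y - b y) by apply: divr_ge0; lra.
exists (y, (t - b y) / (l y - b y)).
  by split=> //=; rewrite in_itv /= t01 ler_pdivrMr // mul1r; lra.
rewrite /g /=; congr \pi_S; apply: val_inj; rewrite /= ger0_norm // divfK ?gt_eqF //.
by congr pair; lra.
Qed.

Lemma suspension_hausdorff : hausdorff_space S.
Proof.
have [n [B growth]] := lk_diff_linear_growth.
apply: (@hausdorff_separating_functions R) => s1 s2.
have [q1 <- ql1] := suspension_normal_point s1.
have [q2 <- ql2] := suspension_normal_point s2.
move=> s12.
have q12 : val q1 <> val q2 by move=> /val_inj q12; move: s12; rewrite q12 eqxx.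
move: ql1 ql2 q12; case E1 : (val q1) => [y1 t1]; case E2 : (val q2) => [y2 t2].
move=> /= tl1 tl2 q12.
pose d := Num.min (l y1 - t1) (l y2 - t2).
have d_gt0 : 0 < d by rewrite lt_min; apply/andP; split; lra.
have d1 : d <= l y1 - t1 by rewrite ge_min lexx.
have d2 : d <= l y2 - t2 by rewrite ge_min lexx orbT.
have [phi phic [phi1 phi2]] : exists2 phi : XA A -> R, continuous phi &
    phi y1 = 1 /\ (y1 <> y2 -> phi y2 = 0).
  have [->|y12] := pselect (y1 = y2); first by exists (fun=> 1); [exact: cst_continuous|].
  by have [phi ? [? ?]] := XA_coordinate_separation R y12; exists phi.
pose G (p : XR) := sep_fun n B d phi (val p).
have G_equiv p q : equiv p q -> G p = G q.
  elim=> {p q} [[[x r] ?] q [lr qE]|//|p q _ //|p p' q _ -> _ -> //].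
  by rewrite /G qE; exact: sep_fun_step.
exists (G \o repr).
  apply: repr_comp_continuous => [p|p q /eqP/suspension_eqP pq]; last exact/eqP/G_equiv.
  apply: continuous_comp; first exact: initial_continuous.
  exact: sep_fun_continuous.
have repr_equiv q : equiv (repr (\pi_S q)) q by apply/suspension_eqP; rewrite reprK.
have low1 : t1 <= l y1 - d by lra.
have low2 : t2 <= l y2 - d by lra.
have G1 : G q1 = l y1 - t1.
  by rewrite /G E1 sep_fun_eq_base // /sep_base cutoff_eq0 //= phi1 subr0 mulr1 mul1r.
have G2 : G q2 = phi y2 * (l y2 - t2).
  by rewrite /G E2 sep_fun_eq_base // /sep_base cutoff_eq0 //= subr0 mulr1.
rewrite /= !(G_equiv _ _ (repr_equiv _)) G1 G2.
have [y12|/phi2->] := pselect (y1 = y2); last by rewrite mul0r; apply/eqP; lra.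
by subst y2; rewrite phi1 mul1r; apply/eqP => t12; apply: q12; congr pair; lra.
Qed.

End Suspension.

Unset Implicit Arguments.

Theorem proposition2p4 (R : realType) (N : nat) (A : 'M[nat]_N)
    (HN : (1 < N)%N) (HA01 : zero_one_mx A) (HAirr : irreducible_mx A)
    (HAperm : ~ is_permutation_mx A)
    (l k b : XA A -> R) (Htrip : suspension_triplet l k b) :
  compact [set: suspension_space l k b] /\
  hausdorff_space (suspension_space l k b).
Proof.
split; [exact: suspension_compact|exact: suspension_hausdorff].
Qed.
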